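(* Let $n\ge2$, $1\le k\le n-1$, and let $X$ be a continuous random variable. Then \[ E[X(n)\mid X(n-k)=u,\ X(n+1)=v]=\frac{u+kv}{k+1}\qquad (l_F<u<v<r_F) \] if and only if $l_F>-\infty$, $r_F=\infty$ and $F(x)=1-e^{-c(x-l_F)}$ for $x\ge l_F$, for some constant $c>0$.
   Context: $X_1,X_2,\dots$ are i.i.d. copies of $X$ with distribution function $F$; $l_F=\inf\{x:F(x)>0\}$, $r_F=\sup\{x:F(x)<1\}$. Upper record times: $L(1)=1$, $L(m)=\min\{j>L(m-1): X_j>X_{L(m-1)}\}$; upper record values $X(m)=X_{L(m)}$. With $R(x)=-\ln(1-F(x))$, conditional expectations given $X(n-k)=u$, $X(n+r)=v$ are taken with respect to the conditional density $\frac{(k+r-1)!}{(k-1)!(r-1)!}[\frac{R(t)-R(u)}{R(v)-R(u)}]^{k-1}[\frac{R(v)-R(t)}{R(v)-R(u)}]^{r-1}\frac{R'(t)}{R(v)-R(u)}$, $u<t<v$. *)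

From Stdlib Require Import Reals Lra.
Open Scope R_scope.

Definition is_cdf (F : R -> R) : Prop :=
  (forall x y, x <= y -> F x <= F y) /\
  (forall x, forall eps, eps > 0 -> exists d, d > 0 /\
        forall y, x <= y < x + d -> Rabs (F y - F x) < eps) /\
  (forall eps, eps > 0 -> exists M, forall x, x <= M -> Rabs (F x) < eps) /\
  (forall eps, eps > 0 -> exists M, forall x, x >= M -> Rabs (F x - 1) < eps).

(* l_F = inf {x : F x > 0} (possibly -oo), r_F = sup {x : F x < 1} (possibly +oo). *)
Definition lF_lt (F : R -> R) (u : R) : Prop := exists x, x < u /\ F x > 0.
Definition lt_rF (F : R -> R) (v : R) : Prop := exists y, v < y /\ F y < 1.
(* "l_F = l" for a real number l (hence l_F > -oo). *)
Definition is_lF (F : R -> R) (l : R) : Prop :=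
  (forall x, F x > 0 -> l <= x) /\
  (forall m, (forall x, F x > 0 -> m <= x) -> m <= l).
Definition rF_infinite (F : R -> R) : Prop := forall x, exists y, x < y /\ F y < 1.

Definition Rhaz (F : R -> R) (x : R) : R := - ln (1 - F x).

Fixpoint rs_sum (g H : R -> R) (x xi : nat -> R) (N : nat) : R :=
  match N with
  | O => 0
  | S m => rs_sum g H x xi m + g (xi m) * (H (x (S m)) - H (x m))
  end.

Definition tagged_partition (a b : R) (x xi : nat -> R) (N : nat) (delta : R) : Prop :=
  (0 < N)%nat /\ x O = a /\ x N = b /\
  (forall i, (i < N)%nat -> x i < x (S i) /\ x i <= xi i <= x (S i)
                            /\ x (S i) - x i < delta).

Definition RS_integral (g H : R -> R) (a b I : R) : Prop :=
  forall eps, eps > 0 -> exists delta, delta > 0 /\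
    forall x xi N, tagged_partition a b x xi N delta ->
      Rabs (rs_sum g H x xi N - I) < eps.

(* Conditional distribution function of X(n) given X(n-k)=u, X(n+1)=v (i.e. r = 1):
   the antiderivative of the conditional density
   k [(R(t)-R(u))/(R(v)-R(u))]^(k-1) R'(t)/(R(v)-R(u)) on (u,v). *)
Definition cond_cdf (F : R -> R) (k : nat) (u v t : R) : R :=
  ((Rhaz F t - Rhaz F u) / (Rhaz F v - Rhaz F u)) ^ k.

(* E[X(n) | X(n-k)=u, X(n+1)=v] = m, i.e. m = int_u^v t dG(t) with G the conditional cdf. *)
Definition cond_exp_is (F : R -> R) (k : nat) (u v m : R) : Prop :=
  RS_integral (fun t => t) (cond_cdf F k u v) u v m.

From Stdlib Require Import Reals Lra Lia.
Open Scope R_scope.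

(* Write R = -ln(1 - F) for the cumulative hazard.  The conditional
   distribution function is G(t) = ((R t - R u)/(R v - R u))^k on [u,v].

   Sufficiency: for F(x) = 1 - exp(-c (x - l)) the hazard is affine, so
   G(t) = ((t - u)/(v - u))^k, and integrating by parts gives the mean
   v - (v - u)/(k + 1) = (u + k v)/(k + 1).

   Necessity: integrating by parts, the hypothesis says that the Riemann
   integral of T(t) = (R t - R u)^k over [u,v] is Q(v) = (v - u) T(v)/(k + 1).
   As T is nondecreasing and continuous, Q' = T = (k + 1) Q(v)/(v - u), so
   Q(v)/(v - u)^(k+1), i.e. ((R v - R u)/(v - u))^k, does not depend on v:
   R is affine where 0 < F < 1, and continuity then forces F to be the
   shifted exponential.  (Only k matters: the conditional law involves n
   only through k.) *)

(** Finite sums and summation by parts *)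

Fixpoint psum (f : nat -> R) (N : nat) : R :=
  match N with O => 0 | S m => psum f m + f m end.

Lemma psum_ext f g N : (forall i, (i < N)%nat -> f i = g i) -> psum f N = psum g N.
Proof.
  induction N as [|N IH]; intros H; simpl; auto.
  rewrite IH by (intros; apply H; lia). rewrite H by lia; auto.
Qed.

Lemma psum_le f g N : (forall i, (i < N)%nat -> f i <= g i) -> psum f N <= psum g N.
Proof.
  induction N as [|N IH]; intros H; simpl; [lra|].
  assert (psum f N <= psum g N) by (apply IH; intros; apply H; lia).
  assert (f N <= g N) by (apply H; lia). lra.
Qed.

Lemma psum_minus f g N : psum (fun i => f i - g i) N = psum f N - psum g N.
Proof. induction N; simpl; [lra|]. rewrite IHN; ring. Qed.

Lemma psum_scal c f N : psum (fun i => c * f i) N = c * psum f N.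
Proof. induction N; simpl; [lra|]. rewrite IHN; ring. Qed.

Lemma psum_telescope h N : psum (fun i => h (S i) - h i) N = h N - h O.
Proof. induction N; simpl; [lra|]. rewrite IHN; ring. Qed.

Lemma psum_split f N M : psum f (N + M) = psum f N + psum (fun i => f (N + i)%nat) M.
Proof.
  induction M as [|M IH]; simpl; [rewrite Nat.add_0_r; ring|].
  rewrite Nat.add_succ_r; simpl; rewrite IH; ring.
Qed.

Lemma rs_sum_psum g H x xi N :
  rs_sum g H x xi N = psum (fun i => g (xi i) * (H (x (S i)) - H (x i))) N.
Proof. induction N; simpl; auto; rewrite IHN; auto. Qed.

Definition lower_sum (T : R -> R) (x : nat -> R) (N : nat) : R :=
  psum (fun i => (x (S i) - x i) * T (x i)) N.
Definition upper_sum (T : R -> R) (x : nat -> R) (N : nat) : R :=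
  psum (fun i => (x (S i) - x i) * T (x (S i))) N.

Lemma abel_left_tags G x N :
  psum (fun i => x i * (G (x (S i)) - G (x i))) N =
  x N * G (x N) - x O * G (x O) - upper_sum G x N.
Proof. unfold upper_sum; induction N; simpl; [ring|]. rewrite IHN; ring. Qed.

Lemma abel_right_tags G x N :
  psum (fun i => x (S i) * (G (x (S i)) - G (x i))) N =
  x N * G (x N) - x O * G (x O) - lower_sum G x N.
Proof. unfold lower_sum; induction N; simpl; [ring|]. rewrite IHN; ring. Qed.

Definition mesh_partition (a b : R) (x : nat -> R) (N : nat) (d : R) : Prop :=
  (0 < N)%nat /\ x O = a /\ x N = b /\
  forall i, (i < N)%nat -> x i < x (S i) /\ x (S i) - x i < d.

Lemma partition_between a b x N d :
  mesh_partition a b x N d -> forall i, (i <= N)%nat -> a <= x i <= b.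
Proof.
  intros [_ [Ha [Hb Hstep]]].
  assert (up : forall i j, (i <= j)%nat -> (j <= N)%nat -> x i <= x j).
  { intros i j Hij; induction Hij as [|j Hij IH]; intros Hj; [lra|].
    assert (x i <= x j) by (apply IH; lia).
    assert (x j < x (S j)) by (apply Hstep; lia). lra. }
  intros k Hk; rewrite <- Ha, <- Hb; split; apply up; lia.
Qed.

Lemma tagged_left a b x N d :
  mesh_partition a b x N d -> tagged_partition a b x x N d.
Proof.
  intros [HN [Ha [Hb Hs]]]; do 3 (split; auto).
  intros i Hi; destruct (Hs i Hi); lra.
Qed.

Lemma tagged_right a b x N d :
  mesh_partition a b x N d -> tagged_partition a b x (fun i => x (S i)) N d.
Proof.
  intros [HN [Ha [Hb Hs]]]; do 3 (split; auto).
  intros i Hi; destruct (Hs i Hi); lra.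
Qed.

Lemma tagged_mesh a b x xi N d :
  tagged_partition a b x xi N d -> mesh_partition a b x N d.
Proof.
  intros [HN [Ha [Hb Hs]]]; do 3 (split; auto).
  intros i Hi; destruct (Hs i Hi) as [A [B C]]; split; lra.
Qed.

Lemma fine_partition_exists a b d :
  a < b -> d > 0 -> exists x N, mesh_partition a b x N d.
Proof.
  intros Hab Hd. destruct (INR_archimed d (b - a) Hd) as [N HN].
  assert (HN0 : (0 < N)%nat) by (destruct N; [simpl in HN; lra | lia]).
  assert (HNpos : 0 < INR N) by (apply lt_0_INR; auto).
  assert (Hstep : 0 < (b - a) / INR N) by (apply Rdiv_lt_0_compat; lra).
  assert (Hfine : (b - a) / INR N < d).
  { apply (Rmult_lt_reg_r (INR N)); auto. unfold Rdiv.
    rewrite Rmult_assoc, Rinv_l, Rmult_1_r by lra. lra. }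
  exists (fun i => a + INR i * ((b - a) / INR N)), N.
  split; [auto | split; [simpl; ring | split; [field; lra |]]].
  intros i _. rewrite S_INR. split; lra.
Qed.

Definition glue (x : nat -> R) (N : nat) (y : nat -> R) (i : nat) : R :=
  if (i <=? N)%nat then x i else y (i - N)%nat.

Lemma glue_lo x N y i : (i <= N)%nat -> glue x N y i = x i.
Proof. intros H; unfold glue; apply Nat.leb_le in H; rewrite H; auto. Qed.

Lemma glue_hi x N y i : y O = x N -> glue x N y (N + i) = y i.
Proof.
  intros E; unfold glue. destruct i as [|i].
  - rewrite Nat.add_0_r, Nat.leb_refl; auto.
  - replace ((N + S i) <=? N)%nat with false by (symmetry; apply Nat.leb_gt; lia).
    f_equal; lia.
Qed.

Lemma glue_partition a b c x N y M d :
  mesh_partition a b x N d -> mesh_partition b c y M d ->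
  mesh_partition a c (glue x N y) (N + M) d.
Proof.
  intros [HN [Ha [Hb Hx]]] [HM [Hb' [Hc Hy]]].
  assert (Hj : y O = x N) by congruence.
  split; [lia | split; [rewrite glue_lo by lia; auto | split; [rewrite glue_hi; auto |]]].
  intros i Hi. destruct (Nat.lt_ge_cases i N) as [h|h].
  - rewrite !glue_lo by lia. apply Hx; auto.
  - replace i with (N + (i - N))%nat by lia.
    replace (S (N + (i - N))) with (N + S (i - N))%nat by lia.
    rewrite !glue_hi by auto. apply Hy; lia.
Qed.

Lemma glue_sums T x N y M : y O = x N ->
  lower_sum T (glue x N y) (N + M) = lower_sum T x N + lower_sum T y M /\
  upper_sum T (glue x N y) (N + M) = upper_sum T x N + upper_sum T y M.
Proof.
  intros Hj; unfold lower_sum, upper_sum; rewrite !psum_split; split; f_equal;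
    solve [ apply psum_ext; intros i Hi; rewrite !glue_lo by lia; auto
          | apply psum_ext; intros i Hi; replace (S (N + i)) with (N + S i)%nat by lia;
            rewrite !glue_hi by auto; auto ].
Qed.

(** Limits of lower and upper sums *)

Definition darboux_limit (T : R -> R) (a b I : R) : Prop :=
  forall e, e > 0 -> exists d, d > 0 /\ forall x N, mesh_partition a b x N d ->
    Rabs (lower_sum T x N - I) < e /\ Rabs (upper_sum T x N - I) < e.

Definition nondecreasing_on (T : R -> R) (a b : R) : Prop :=
  forall s t, a <= s -> s <= t -> t <= b -> T s <= T t.

Lemma darboux_ext T T' a b I :
  (forall t, a <= t <= b -> T t = T' t) ->
  darboux_limit T a b I -> darboux_limit T' a b I.
Proof.
  intros E HT e He. destruct (HT e He) as [d [Hd Hsum]].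
  exists d; split; auto. intros x N Hx.
  assert (Hin := partition_between a b x N d Hx).
  assert (EL : lower_sum T' x N = lower_sum T x N).
  { apply psum_ext; intros i Hi; rewrite E; auto; apply Hin; lia. }
  assert (EU : upper_sum T' x N = upper_sum T x N).
  { apply psum_ext; intros i Hi; rewrite E; auto; apply Hin; lia. }
  rewrite EL, EU; auto.
Qed.

Lemma darboux_scale c T a b I :
  darboux_limit T a b I -> darboux_limit (fun t => c * T t) a b (c * I).
Proof.
  intros HT e He.
  assert (Hc : 0 < Rabs c + 1) by (pose proof (Rabs_pos c); lra).
  destruct (HT (e / (Rabs c + 1)) ltac:(apply Rdiv_lt_0_compat; lra)) as [d [Hd Hsum]].
  exists d; split; auto. intros x N Hx. destruct (Hsum x N Hx) as [HL HU].
  assert (scale : forall s, Rabs (s - I) < e / (Rabs c + 1) -> Rabs (c * s - c * I) < e).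
  { intros s Hs. rewrite <- Rmult_minus_distr_l, Rabs_mult.
    apply Rle_lt_trans with (Rabs c * (e / (Rabs c + 1))).
    - apply Rmult_le_compat_l; [apply Rabs_pos | lra].
    - apply (Rmult_lt_reg_r (Rabs c + 1)); auto. field_simplify; lra. }
  assert (EL : lower_sum (fun t => c * T t) x N = c * lower_sum T x N).
  { unfold lower_sum; rewrite <- psum_scal; apply psum_ext; intros; ring. }
  assert (EU : upper_sum (fun t => c * T t) x N = c * upper_sum T x N).
  { unfold upper_sum; rewrite <- psum_scal; apply psum_ext; intros; ring. }
  rewrite EL, EU; split; apply scale; auto.
Qed.

Lemma sums_bracket T a b x N d :
  nondecreasing_on T a b -> mesh_partition a b x N d ->
  (b - a) * T a <= lower_sum T x N /\ upper_sum T x N <= (b - a) * T b.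
Proof.
  intros Hmon Hx. pose proof (partition_between a b x N d Hx) as Hin.
  destruct Hx as [_ [Ha [Hb Hs]]].
  assert (Hlen : forall c, (b - a) * c = psum (fun i => (x (S i) - x i) * c) N).
  { intros c. rewrite (psum_ext _ (fun i => c * (x (S i) - x i))) by (intros; ring).
    rewrite psum_scal, (psum_telescope x), Ha, Hb; ring. }
  unfold lower_sum, upper_sum; rewrite !Hlen.
  split; apply psum_le; intros i Hi;
    destruct (Hs i Hi); destruct (Hin i ltac:(lia)); destruct (Hin (S i) ltac:(lia));
    apply Rmult_le_compat_l; try lra; apply Hmon; lra.
Qed.

Lemma darboux_of_antiderivative T Phi a b :
  a < b -> nondecreasing_on T a b ->
  (forall s t, a <= s -> s <= t -> t <= b ->
     (t - s) * T s <= Phi t - Phi s <= (t - s) * T t) ->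
  darboux_limit T a b (Phi b - Phi a).
Proof.
  intros Hab Hmon Hphi e He.
  assert (Hosc : 0 <= T b - T a) by (assert (T a <= T b) by (apply Hmon; lra); lra).
  exists (e / (T b - T a + 1)). split; [apply Rdiv_lt_0_compat; lra|].
  intros x N Hx. pose proof (partition_between a b x N _ Hx) as Hin.
  destruct Hx as [_ [Ha [Hb Hs]]].
  assert (Htot : Phi b - Phi a = psum (fun i => Phi (x (S i)) - Phi (x i)) N)
    by (rewrite (psum_telescope (fun i => Phi (x i))), Ha, Hb; auto).
  assert (HL : lower_sum T x N <= Phi b - Phi a).
  { rewrite Htot. apply psum_le; intros i Hi; destruct (Hs i Hi);
      destruct (Hin i ltac:(lia)); destruct (Hin (S i) ltac:(lia)); apply Hphi; lra. }
  assert (HU : Phi b - Phi a <= upper_sum T x N).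
  { rewrite Htot. apply psum_le; intros i Hi; destruct (Hs i Hi);
      destruct (Hin i ltac:(lia)); destruct (Hin (S i) ltac:(lia)); apply Hphi; lra. }
  assert (Hgap : upper_sum T x N - lower_sum T x N < e).
  { unfold upper_sum, lower_sum. rewrite <- psum_minus.
    apply Rle_lt_trans with
      (psum (fun i => e / (T b - T a + 1) * (T (x (S i)) - T (x i))) N).
    - apply psum_le; intros i Hi; destruct (Hs i Hi);
        destruct (Hin i ltac:(lia)); destruct (Hin (S i) ltac:(lia)).
      assert (T (x i) <= T (x (S i))) by (apply Hmon; lra).
      rewrite <- Rmult_minus_distr_l. apply Rmult_le_compat_r; lra.
    - rewrite psum_scal, (psum_telescope (fun i => T (x i))), Ha, Hb.
      apply (Rmult_lt_reg_r (T b - T a + 1)); [lra|]. field_simplify; lra. }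
  split; apply Rabs_def1; lra.
Qed.

(* Integration by parts, from Stieltjes integrals of the identity against G
   to the sums of G, ... *)
Lemma darboux_of_RS G a b m :
  RS_integral (fun t => t) G a b m -> darboux_limit G a b (b * G b - a * G a - m).
Proof.
  intros HRS e He. destruct (HRS e He) as [d [Hd Hsum]].
  exists d; split; auto. intros x N Hx.
  pose proof (Hsum x _ N (tagged_right _ _ _ _ _ Hx)) as HR.
  pose proof (Hsum x _ N (tagged_left _ _ _ _ _ Hx)) as HL.
  destruct Hx as [_ [Ha [Hb _]]].
  rewrite rs_sum_psum in HR, HL.
  rewrite abel_right_tags, Ha, Hb in HR. rewrite abel_left_tags, Ha, Hb in HL.
  rewrite <- Rabs_Ropp in HR, HL.
  split; [replace (lower_sum G x N - _) with (- (b * G b - a * G a - lower_sum G x N - m)) by ring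
         | replace (upper_sum G x N - _) with (- (b * G b - a * G a - upper_sum G x N - m)) by ring];
    auto.
Qed.

(* ... and back, for a nondecreasing integrator G, whose Stieltjes sums with
   arbitrary tags lie between those with left and right tags. *)
Lemma RS_of_darboux G a b J :
  nondecreasing_on G a b -> darboux_limit G a b J ->
  RS_integral (fun t => t) G a b (b * G b - a * G a - J).
Proof.
  intros Hmon HJ e He. destruct (HJ e He) as [d [Hd Hsum]].
  exists d; split; auto. intros x xi N Hp.
  pose proof (tagged_mesh _ _ _ _ _ _ Hp) as Hx.
  destruct (Hsum x N Hx) as [HL HU]. apply Rabs_def2 in HL, HU.
  pose proof (partition_between a b x N d Hx) as Hin.
  destruct Hp as [_ [Ha [Hb Hs]]].
  assert (Hlo : psum (fun i => x i * (G (x (S i)) - G (x i))) N <= rs_sum (fun t => t) G x xi N).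
  { rewrite rs_sum_psum. apply psum_le; intros i Hi. destruct (Hs i Hi) as [A [B _]].
    destruct (Hin i ltac:(lia)); destruct (Hin (S i) ltac:(lia)).
    assert (G (x i) <= G (x (S i))) by (apply Hmon; lra).
    apply Rmult_le_compat_r; lra. }
  assert (Hhi : rs_sum (fun t => t) G x xi N <= psum (fun i => x (S i) * (G (x (S i)) - G (x i))) N).
  { rewrite rs_sum_psum. apply psum_le; intros i Hi. destruct (Hs i Hi) as [A [B _]].
    destruct (Hin i ltac:(lia)); destruct (Hin (S i) ltac:(lia)).
    assert (G (x i) <= G (x (S i))) by (apply Hmon; lra).
    apply Rmult_le_compat_r; lra. }
  rewrite abel_left_tags, Ha, Hb in Hlo. rewrite abel_right_tags, Ha, Hb in Hhi.
  apply Rabs_def1; lra.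
Qed.

Lemma darboux_increment T a b c I1 I2 :
  a < b -> b < c -> nondecreasing_on T a c ->
  darboux_limit T a b I1 -> darboux_limit T a c I2 ->
  (c - b) * T b <= I2 - I1 <= (c - b) * T c.
Proof.
  intros Hab Hbc Hmon H1 H2.
  assert (approx : forall e, e > 0 ->
    (c - b) * T b - 2 * e < I2 - I1 /\ I2 - I1 < (c - b) * T c + 2 * e).
  { intros e He.
    destruct (H1 e He) as [d1 [Hd1 S1]]. destruct (H2 e He) as [d2 [Hd2 S2]].
    assert (Hd : Rmin d1 d2 > 0) by (apply Rmin_pos; auto).
    destruct (fine_partition_exists a b _ Hab Hd) as [x [N Hx]].
    destruct (fine_partition_exists b c _ Hbc Hd) as [y [M Hy]].
    assert (Hj : y O = x N) by (destruct Hx as [_ [_ [-> _]]]; destruct Hy as [_ [-> _]]; auto).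
    destruct (glue_sums T x N y M Hj) as [EL EU].
    assert (Hmon' : nondecreasing_on T b c) by (intros s t ? ? ?; apply Hmon; lra).
    destruct (sums_bracket T b c y M _ Hmon' Hy) as [BL BU].
    assert (weak : forall p q z K, mesh_partition p q z K (Rmin d1 d2) ->
                     mesh_partition p q z K d1 /\ mesh_partition p q z K d2).
    { intros p q z K [HK [Hp [Hq Hz]]]. pose proof (Rmin_l d1 d2). pose proof (Rmin_r d1 d2).
      split; (split; [auto | split; [auto | split; [auto |]]]);
        intros i Hi; destruct (Hz i Hi); split; lra. }
    destruct (weak _ _ _ _ Hx) as [Hx1 _].
    destruct (weak _ _ _ _ (glue_partition _ _ _ _ _ _ _ _ Hx Hy)) as [_ Hg2].
    destruct (S1 x N Hx1) as [A1 B1]. destruct (S2 _ _ Hg2) as [A2 B2].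
    rewrite EL in A2. rewrite EU in B2.
    apply Rabs_def2 in A1, B1, A2, B2. split; lra. }
  split; apply Rle_plus_epsilon; intros e He; destruct (approx (e / 2) ltac:(lra)); lra.
Qed.

Lemma continuity_pt_eps f x : continuity_pt f x -> forall e, e > 0 ->
  exists d, d > 0 /\ forall y, Rabs (y - x) < d -> Rabs (f y - f x) < e.
Proof.
  intros H e He. destruct (H e He) as [d [Hd Hy]].
  exists d; split; auto. intros y Hyd.
  destruct (Req_dec y x) as [->|Hne].
  - rewrite Rminus_diag, Rabs_R0; lra.
  - apply (Hy y). split; [split; [exact I | auto] | exact Hyd].
Qed.

Lemma derivative_of_bracketed_increments Q T a b v :
  a < v < b -> continuity_pt T v ->
  (forall s t, a < s -> s < t -> t < b ->
     (t - s) * T s <= Q t - Q s <= (t - s) * T t) ->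
  derivable_pt_lim Q v (T v).
Proof.
  intros Hv HT Hinc e He.
  destruct (continuity_pt_eps T v HT e He) as [dT [HdT CT]].
  assert (Hd : 0 < Rmin dT (Rmin (v - a) (b - v))) by (repeat apply Rmin_pos; lra).
  exists (mkposreal _ Hd). intros h Hh0 Hh. simpl in Hh.
  pose proof (Rmin_l dT (Rmin (v - a) (b - v))) as H1.
  pose proof (Rmin_r dT (Rmin (v - a) (b - v))) as H2.
  pose proof (Rmin_l (v - a) (b - v)). pose proof (Rmin_r (v - a) (b - v)).
  assert (Hclose := CT (v + h) ltac:(replace (v + h - v) with h by ring; lra)).
  apply Rabs_def2 in Hclose.
  assert (Hq : h * ((Q (v + h) - Q v) / h) = Q (v + h) - Q v) by (field; auto).
  set (q := (Q (v + h) - Q v) / h) in *.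
  assert (Hbetween : T v <= q <= T (v + h) \/ T (v + h) <= q <= T v).
  { apply Rabs_def2 in Hh. destruct (Rlt_or_le 0 h) as [hp|hn].
    - left. destruct (Hinc v (v + h)) as [B1 B2]; try lra. split; nra.
    - right. assert (h < 0) by lra.
      destruct (Hinc (v + h) v) as [B1 B2]; try lra. split; nra. }
  apply Rabs_def1; lra.
Qed.

Lemma power_ratio_constant (Q : R -> R) (p : nat) a b v1 v2 :
  (forall v, a < v < b -> derivable_pt_lim Q v (INR p * Q v / (v - a))) ->
  a < v1 < b -> a < v2 < b ->
  Q v1 / (v1 - a) ^ p = Q v2 / (v2 - a) ^ p.
Proof.
  intros HQ.
  set (g := fun t => Q t / (t - a) ^ p).
  assert (Hg : forall v, a < v < b -> derivable_pt_lim g v 0).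
  { intros v Hv.
    assert (Hshift : derivable_pt_lim (fun t => (t - a) ^ p) v (INR p * (v - a) ^ pred p * 1)).
    { apply (derivable_pt_lim_comp (fun t => t - a) (fun y => y ^ p)).
      - replace 1 with (1 - 0) by ring.
        apply (derivable_pt_lim_minus id (fct_cte a)).
        + apply derivable_pt_lim_id.
        + apply derivable_pt_lim_const.
      - apply derivable_pt_lim_pow. }
    assert (Hne : (v - a) ^ p <> 0) by (apply pow_nonzero; lra).
    pose proof (derivable_pt_lim_div Q (fun t => (t - a) ^ p) v _ _ (HQ v Hv) Hshift Hne) as D.
    replace 0 with ((INR p * Q v / (v - a) * (v - a) ^ p
                     - INR p * (v - a) ^ pred p * 1 * Q v) / ((v - a) ^ p)²); auto.
    destruct p as [|p]; simpl pred; [change (INR 0) with 0; unfold Rsqr; field; lra|].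
    rewrite <- tech_pow_Rmult. unfold Rsqr. field. split; try lra; apply pow_nonzero; lra. }
  assert (flat : forall s t, a < s < b -> a < t < b -> s < t -> g s = g t).
  { intros s t Hs Ht Hst.
    destruct (MVT_cor2 g (fun _ => 0) s t Hst) as [c [Hc _]].
    - intros c Hc; apply Hg; lra.
    - lra. }
  intros H1 H2. change (g v1 = g v2).
  destruct (Rtotal_order v1 v2) as [h|[->|h]]; auto.
  symmetry; auto.
Qed.

Lemma pow_increment_bounds (p q : R) (k : nat) : 0 <= p <= q ->
  INR (S k) * p ^ k * (q - p) <= q ^ S k - p ^ S k <= INR (S k) * q ^ k * (q - p).
Proof.
  intros [H0 Hpq]. destruct Hpq as [Hlt | <-]; [| rewrite !Rminus_diag; lra].
  destruct (MVT_cor2 (fun y => y ^ S k) (fun y => INR (S k) * y ^ k) p q Hlt)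
    as [c [Hc Hcpq]].
  { intros c _. apply derivable_pt_lim_pow. }
  rewrite Hc.
  assert (p ^ k <= c ^ k) by (apply pow_incr; lra).
  assert (c ^ k <= q ^ k) by (apply pow_incr; lra).
  pose proof (pos_INR (S k)). split; apply Rmult_le_compat_r; try lra;
    apply Rmult_le_compat_l; lra.
Qed.

Lemma pow_inj_nonneg (a b : R) (k : nat) :
  (0 < k)%nat -> 0 <= a -> 0 <= b -> a ^ k = b ^ k -> a = b.
Proof.
  intros Hk Ha Hb E.
  assert (strict : forall s t, 0 <= s -> s < t -> s ^ k < t ^ k).
  { intros s t Hs Hst.
    destruct (pow_lt_1_compat (s / t) k) as [_ Hlt1]; auto.
    { split; [apply Rmult_le_pos; [lra | left; apply Rinv_0_lt_compat; lra]|].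
      apply (Rmult_lt_reg_r t); [lra|]. field_simplify; lra. }
    replace (s ^ k) with ((s / t) ^ k * t ^ k)
      by (rewrite <- Rpow_mult_distr; f_equal; field; lra).
    assert (0 < t ^ k) by (apply pow_lt; lra). nra. }
  destruct (Rtotal_order a b) as [h|[h|h]]; auto.
  - pose proof (strict a b Ha h); lra.
  - pose proof (strict b a Hb h); lra.
Qed.

(* The normalized power ((t-u)/(v-u))^k is the conditional distribution
   function in the exponential case; its sums converge to (v-u)/(k+1). *)
Definition unit_power (u v : R) (k : nat) (t : R) : R := ((t - u) / (v - u)) ^ k.

Lemma unit_power_eq u v k t : u < v -> unit_power u v k t = (t - u) ^ k / (v - u) ^ k.
Proof. intros H; unfold unit_power, Rdiv; rewrite Rpow_mult_distr, pow_inv; auto. Qed.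

Lemma unit_power_nondecreasing u v k : u < v -> nondecreasing_on (unit_power u v k) u v.
Proof.
  intros Huv s t Hs Hst Ht. rewrite !unit_power_eq by auto.
  assert (0 < / (v - u) ^ k) by (apply Rinv_0_lt_compat, pow_lt; lra).
  apply Rmult_le_compat_r; [lra|]. apply pow_incr; lra.
Qed.

Lemma unit_power_darboux u v k : u < v ->
  darboux_limit (unit_power u v k) u v ((v - u) / (INR k + 1)).
Proof.
  intros Huv.
  assert (Hk : INR k + 1 <> 0) by (pose proof (pos_INR k); lra).
  assert (Hvu : (v - u) ^ k <> 0) by (apply pow_nonzero; lra).
  assert (Hc : 0 < / ((INR k + 1) * (v - u) ^ k))
    by (apply Rinv_0_lt_compat, Rmult_lt_0_compat; [pose proof (pos_INR k); lra | apply pow_lt; lra]).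
  set (Phi := fun t => (t - u) ^ S k / ((INR k + 1) * (v - u) ^ k)).
  replace ((v - u) / (INR k + 1)) with (Phi v - Phi u)
    by (unfold Phi; rewrite Rminus_diag, pow_i by lia; simpl; field; auto).
  apply darboux_of_antiderivative; auto using unit_power_nondecreasing.
  intros s t Hs Hst Ht. rewrite !unit_power_eq by auto.
  destruct (pow_increment_bounds (s - u) (t - u) k ltac:(lra)) as [B1 B2].
  rewrite S_INR in B1, B2.
  replace ((t - s) * ((s - u) ^ k / (v - u) ^ k))
    with ((INR k + 1) * (s - u) ^ k * (t - u - (s - u)) / ((INR k + 1) * (v - u) ^ k))
    by (field; auto).
  replace ((t - s) * ((t - u) ^ k / (v - u) ^ k))
    with ((INR k + 1) * (t - u) ^ k * (t - u - (s - u)) / ((INR k + 1) * (v - u) ^ k))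
    by (field; auto).
  unfold Phi, Rdiv. rewrite <- Rmult_minus_distr_r.
  split; apply Rmult_le_compat_r; lra.
Qed.

Section DistributionFunction.
Variable F : R -> R.
Hypothesis hF : is_cdf F.
Hypothesis hc : continuity F.

Lemma cdf_mono x y : x <= y -> F x <= F y.
Proof. apply (proj1 hF). Qed.

Lemma cdf_nonneg x : 0 <= F x.
Proof.
  destruct hF as [_ [_ [H0 _]]]. destruct (Rle_lt_dec 0 (F x)) as [h|h]; auto.
  destruct (H0 (- F x) ltac:(lra)) as [M HM].
  pose proof (HM (Rmin x M) (Rmin_r x M)) as HA. apply Rabs_def2 in HA.
  pose proof (cdf_mono (Rmin x M) x (Rmin_l x M)). lra.
Qed.

Lemma cdf_small y : 0 < y -> exists x, F x < y.
Proof.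
  destruct hF as [_ [_ [H0 _]]]. intros Hy. destruct (H0 y Hy) as [M HM].
  exists M. pose proof (HM M ltac:(lra)) as HA. apply Rabs_def2 in HA; lra.
Qed.

Lemma cdf_big y : y < 1 -> exists x, y < F x.
Proof.
  destruct hF as [_ [_ [_ H1]]]. intros Hy. destruct (H1 (1 - y) ltac:(lra)) as [M HM].
  exists M. pose proof (HM M ltac:(lra)) as HA. apply Rabs_def2 in HA; lra.
Qed.

Lemma cdf_ivt a b y : F a < y < F b -> exists z, a < z < b /\ F z = y.
Proof.
  intros Hy.
  assert (Hab : a < b)
    by (destruct (Rlt_le_dec a b) as [h|h]; auto; pose proof (cdf_mono b a h); lra).
  assert (Hcy : continuity (fun t => F t - y))
    by (apply (continuity_minus F (fct_cte y)); auto; apply continuity_const; now intros).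
  destruct (IVT (fun t => F t - y) a b Hcy Hab ltac:(lra) ltac:(lra)) as [z [Hz Ez]].
  exists z. assert (z <> a) by (intros ->; lra). assert (z <> b) by (intros ->; lra).
  split; lra.
Qed.

Lemma cdf_interior_value y : 0 < y < 1 -> exists u, F u = y.
Proof.
  intros Hy. destruct (cdf_small y ltac:(lra)) as [a Ha].
  destruct (cdf_big y ltac:(lra)) as [b Hb].
  destruct (cdf_ivt a b y ltac:(lra)) as [u [_ Hu]]; eauto.
Qed.

Lemma lF_lt_of_pos u : 0 < F u -> lF_lt F u.
Proof.
  intros Hu. destruct (continuity_pt_eps F u (hc u) (F u) Hu) as [d [Hd Hy]].
  exists (u - d / 2). split; [lra|].
  pose proof (Hy (u - d / 2) ltac:(rewrite Rabs_left; lra)) as HA.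
  apply Rabs_def2 in HA; lra.
Qed.

Lemma lt_rF_of_lt1 v : F v < 1 -> lt_rF F v.
Proof.
  intros Hv. destruct (continuity_pt_eps F v (hc v) (1 - F v) ltac:(lra)) as [d [Hd Hy]].
  exists (v + d / 2). split; [lra|].
  pose proof (Hy (v + d / 2) ltac:(rewrite Rabs_right; lra)) as HA.
  apply Rabs_def2 in HA; lra.
Qed.

Lemma hazard_mono a b : F a <= F b -> F b < 1 -> Rhaz F a <= Rhaz F b.
Proof.
  intros Hab Hb. unfold Rhaz.
  destruct Hab as [h| ->]; [|lra].
  pose proof (ln_increasing (1 - F b) (1 - F a) ltac:(lra) ltac:(lra)); lra.
Qed.

Lemma hazard_strict a b : F a < F b -> F b < 1 -> Rhaz F a < Rhaz F b.
Proof.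
  intros Hab Hb. unfold Rhaz.
  pose proof (ln_increasing (1 - F b) (1 - F a) ltac:(lra) ltac:(lra)); lra.
Qed.

Lemma hazard_pos a : 0 < F a < 1 -> 0 < Rhaz F a.
Proof.
  intros Ha. unfold Rhaz.
  pose proof (ln_increasing (1 - F a) 1 ltac:(lra) ltac:(lra)). rewrite ln_1 in *; lra.
Qed.

Lemma cdf_of_hazard a : F a < 1 -> F a = 1 - exp (- Rhaz F a).
Proof. intros H. unfold Rhaz. rewrite Ropp_involutive, exp_ln by lra. ring. Qed.

Lemma hazard_continuous a : F a < 1 -> continuity_pt (Rhaz F) a.
Proof.
  intros Ha. unfold Rhaz.
  apply (continuity_pt_opp (fun t => ln (1 - F t))).
  apply (continuity_pt_comp (fun t => 1 - F t) ln).
  - apply (continuity_pt_minus (fct_cte 1) F); [apply continuity_pt_const; now intros | apply hc].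
  - apply derivable_continuous_pt. exists (/ (1 - F a)). apply derivable_pt_lim_ln; lra.
Qed.

End DistributionFunction.

(** Sufficiency: the exponential law has the stated regression *)

Lemma RS_ext g G G' a b I :
  (forall t, a <= t <= b -> G t = G' t) ->
  RS_integral g G a b I -> RS_integral g G' a b I.
Proof.
  intros E HG e He. destruct (HG e He) as [d [Hd Hsum]].
  exists d; split; auto. intros x xi N Hp.
  pose proof (partition_between a b x N d (tagged_mesh _ _ _ _ _ _ Hp)) as Hin.
  replace (rs_sum g G' x xi N) with (rs_sum g G x xi N); [now apply Hsum|].
  rewrite !rs_sum_psum. apply psum_ext; intros i Hi; rewrite !E; auto; apply Hin; lia.
Qed.

Lemma unit_power_mean u v k : u < v -> (1 <= k)%nat ->
  RS_integral (fun t => t) (unit_power u v k) u v ((u + INR k * v) / (INR k + 1)).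
Proof.
  intros Huv Hk.
  assert (H0 : unit_power u v k u = 0)
    by (unfold unit_power; rewrite Rminus_diag; unfold Rdiv; rewrite Rmult_0_l; apply pow_i; lia).
  assert (H1 : unit_power u v k v = 1)
    by (unfold unit_power; rewrite Rdiv_diag by lra; apply pow1).
  replace ((u + INR k * v) / (INR k + 1))
    with (v * unit_power u v k v - u * unit_power u v k u - (v - u) / (INR k + 1))
    by (rewrite H0, H1; field; pose proof (pos_INR k); lra).
  apply RS_of_darboux; auto using unit_power_nondecreasing, unit_power_darboux.
Qed.

Lemma exponential_cond_exp F k l c u v :
  (1 <= k)%nat -> is_lF F l -> c > 0 ->
  (forall x, l <= x -> F x = 1 - exp (- (c * (x - l)))) ->
  lF_lt F u -> u < v ->
  cond_exp_is F k u v ((u + INR k * v) / (INR k + 1)).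
Proof.
  intros Hk Hl Hc Hform [x0 [Hx0 Fx0]] Huv.
  assert (Hlu : l < u) by (pose proof (proj1 Hl x0 Fx0); lra).
  assert (Hhaz : forall s, l <= s -> Rhaz F s = c * (s - l)).
  { intros s Hs. unfold Rhaz. rewrite Hform by auto.
    replace (1 - (1 - exp (- (c * (s - l))))) with (exp (- (c * (s - l)))) by ring.
    rewrite ln_exp; ring. }
  apply (RS_ext _ (unit_power u v k)); [| now apply unit_power_mean].
  intros t Ht. unfold cond_cdf, unit_power. rewrite !Hhaz by lra.
  replace (c * (t - l) - c * (u - l)) with (c * (t - u)) by ring.
  replace (c * (v - l) - c * (u - l)) with (c * (v - u)) by ring.
  f_equal. field. split; lra.
Qed.

(** Necessity: the regression forces an affine cumulative hazard *)

(* With base point u, the regression identity says that the Riemann integral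
   over [u,v] of (R t - R u)^k equals (v - u) (R v - R u)^k / (k + 1). *)
Definition hazard_power (F : R -> R) (k : nat) (u t : R) : R := (Rhaz F t - Rhaz F u) ^ k.
Definition hazard_primitive (F : R -> R) (k : nat) (u v : R) : R :=
  (v - u) * hazard_power F k u v / (INR k + 1).

Section Regression.
Variables (F : R -> R) (k : nat).
Hypothesis hF : is_cdf F.
Hypothesis hc : continuity F.
Hypothesis hk : (1 <= k)%nat.
Hypothesis hreg : forall u v, lF_lt F u -> u < v -> lt_rF F v -> F u < F v ->
  cond_exp_is F k u v ((u + INR k * v) / (INR k + 1)).

Lemma hazard_power_nondecreasing u b :
  F b < 1 -> nondecreasing_on (hazard_power F k u) u b.
Proof.
  intros Hb s t Hs Hst Ht. unfold hazard_power.
  pose proof (cdf_mono F hF s t Hst). pose proof (cdf_mono F hF t b Ht).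
  assert (Rhaz F u <= Rhaz F s) by (apply (hazard_mono F); auto using cdf_mono; lra).
  assert (Rhaz F s <= Rhaz F t) by (apply (hazard_mono F); lra).
  apply pow_incr; lra.
Qed.

Lemma hazard_power_continuous u v : F v < 1 -> continuity_pt (hazard_power F k u) v.
Proof.
  intros Hv. unfold hazard_power.
  apply (continuity_pt_comp (fun t => Rhaz F t - Rhaz F u) (fun y => y ^ k)).
  - apply (continuity_pt_minus (Rhaz F) (fct_cte (Rhaz F u))).
    + apply hazard_continuous; auto.
    + apply continuity_pt_const; now intros.
  - apply derivable_continuous_pt. eexists. apply derivable_pt_lim_pow.
Qed.

(* The regression identity read as an integral identity; when F is flat on
   [u,v] both sides vanish and no hypothesis is needed. *)
Lemma hazard_darboux u v : 0 < F u -> u < v -> F v < 1 ->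
  darboux_limit (hazard_power F k u) u v (hazard_primitive F k u v).
Proof.
  intros Hu Huv Hv. unfold hazard_primitive.
  destruct (Rle_lt_dec (F v) (F u)) as [Hflat | Hincr].
  -
    assert (Hzero : forall t, u <= t <= v -> hazard_power F k u t = 0).
    { intros t Ht. pose proof (cdf_mono F hF u t (proj1 Ht)).
      pose proof (cdf_mono F hF t v (proj2 Ht)).
      unfold hazard_power, Rhaz. replace (F t) with (F u) by lra.
      rewrite Rminus_diag; apply pow_i; lia. }
    rewrite Hzero by lra. unfold Rdiv; rewrite Rmult_0_r, Rmult_0_l.
    apply (darboux_ext (fun _ => 0)); [intros; symmetry; auto|].
    assert (H0 : darboux_limit (fun _ => 0) u v (0 - 0)).
    { apply (darboux_of_antiderivative _ (fun _ => 0)); auto;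
        [intros ? ? ? ? ?; lra | intros; lra]. }
    rewrite Rminus_diag in H0; exact H0.
  - set (Tv := hazard_power F k u v).
    assert (HTv : 0 < Tv)
      by (apply pow_lt; pose proof (hazard_strict F u v Hincr Hv); lra).
    assert (Hcond : forall t, Tv * cond_cdf F k u v t = hazard_power F k u t).
    { intros t. unfold cond_cdf, Tv, hazard_power.
      rewrite <- Rpow_mult_distr. f_equal. field.
      pose proof (hazard_strict F u v Hincr Hv); lra. }
    pose proof (darboux_of_RS _ _ _ _
      (hreg u v (lF_lt_of_pos F hc u Hu) Huv (lt_rF_of_lt1 F hc v Hv) Hincr)) as HD.
    assert (Gu : cond_cdf F k u v u = 0).
    { unfold cond_cdf. rewrite Rminus_diag. unfold Rdiv; rewrite Rmult_0_l; apply pow_i; lia. }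
    assert (Gv : cond_cdf F k u v v = 1).
    { apply (Rmult_eq_reg_l Tv); [rewrite Hcond; fold Tv; ring | lra]. }
    rewrite Gu, Gv in HD.
    apply (darboux_scale Tv), (darboux_ext _ _ _ _ _ (fun t _ => Hcond t)) in HD.
    replace ((v - u) * Tv / (INR k + 1))
      with (Tv * (v * 1 - u * 0 - (u + INR k * v) / (INR k + 1))); auto.
    field; pose proof (pos_INR k); lra.
Qed.

(* Q := hazard_primitive u has derivative T := hazard_power u on (u, r_F),
   by additivity of the integral and continuity of T. *)
Lemma hazard_primitive_derivative u b v :
  0 < F u -> F b < 1 -> u < v < b ->
  derivable_pt_lim (hazard_primitive F k u) v (hazard_power F k u v).
Proof.
  intros Hu Hb Hv.
  apply derivative_of_bracketed_increments with u b; auto.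
  - apply hazard_power_continuous. pose proof (cdf_mono F hF v b); lra.
  - intros s t Hs Hst Ht.
    assert (Ft : F t < 1) by (pose proof (cdf_mono F hF t b); lra).
    assert (Fs : F s < 1) by (pose proof (cdf_mono F hF s t); lra).
    apply (darboux_increment (hazard_power F k u) u s t); try lra;
      [apply hazard_power_nondecreasing | apply hazard_darboux | apply hazard_darboux];
      auto; lra.
Qed.

(* Since also (k + 1) Q v = (v - u) T v, Q v / (v - u)^(k+1) is constant;
   so the slope of R from u is the same at all v in (u, r_F). *)
Lemma hazard_slope_constant u v1 v2 :
  0 < F u -> u < v1 -> u < v2 -> F v1 < 1 -> F v2 < 1 ->
  (Rhaz F v1 - Rhaz F u) * (v2 - u) = (Rhaz F v2 - Rhaz F u) * (v1 - u).
Proof.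
  intros Hu H1 H2 F1 F2.
  assert (Fm : F (Rmax v1 v2) < 1) by (unfold Rmax; destruct Rle_dec; auto).
  destruct (lt_rF_of_lt1 F hc _ Fm) as [b [Hb Fb]].
  pose proof (Rmax_l v1 v2). pose proof (Rmax_r v1 v2).
  assert (Hratio := power_ratio_constant (hazard_primitive F k u) (S k) u b v1 v2).
  assert (Hk0 : INR k + 1 <> 0) by (pose proof (pos_INR k); lra).
  assert (slope : forall v, u < v -> F v < 1 -> 0 <= (Rhaz F v - Rhaz F u) / (v - u)).
  { intros v Hv Fv. apply Rmult_le_pos; [| left; apply Rinv_0_lt_compat; lra].
    pose proof (hazard_mono F u v (cdf_mono F hF u v (Rlt_le _ _ Hv)) Fv); lra. }
  assert (normal : forall v, u < v ->
    hazard_primitive F k u v / (v - u) ^ S k = ((Rhaz F v - Rhaz F u) / (v - u)) ^ k / (INR k + 1)).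
  { intros v Hv. unfold hazard_primitive, hazard_power, Rdiv. rewrite Rpow_mult_distr, pow_inv.
    rewrite <- tech_pow_Rmult. field. split; auto; split; [apply pow_nonzero|]; lra. }
  rewrite !normal in Hratio by lra.
  assert (E : (Rhaz F v1 - Rhaz F u) / (v1 - u) = (Rhaz F v2 - Rhaz F u) / (v2 - u)).
  { apply (pow_inj_nonneg _ _ k); auto.
    apply (Rmult_eq_reg_r (/ (INR k + 1))); [| apply Rinv_neq_0_compat; auto].
    apply Hratio; [| lra | lra].
    intros v Hv. rewrite S_INR.
    replace ((INR k + 1) * hazard_primitive F k u v / (v - u)) with (hazard_power F k u v)
      by (unfold hazard_primitive; field; split; auto; lra).
    apply hazard_primitive_derivative with b; auto. }
  apply (Rmult_eq_reg_r (/ ((v1 - u) * (v2 - u))));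
    [| apply Rinv_neq_0_compat, Rmult_integral_contrapositive_currified; lra].
  replace ((Rhaz F v1 - Rhaz F u) * (v2 - u) * / ((v1 - u) * (v2 - u)))
    with ((Rhaz F v1 - Rhaz F u) / (v1 - u)) by (field; lra).
  rewrite E. field; lra.
Qed.

(* Affine on [u, r_F) for every base point u with 0 < F u gives a single
   line through all points where 0 < F < 1. *)
Lemma hazard_affine :
  exists l c, c > 0 /\ forall x, 0 < F x < 1 -> Rhaz F x = c * (x - l).
Proof.
  destruct (cdf_interior_value F hF hc (1/2) ltac:(lra)) as [u0 Fu0].
  destruct (cdf_interior_value F hF hc (3/4) ltac:(lra)) as [z0 Fz0].
  assert (Huz : u0 < z0)
    by (destruct (Rlt_le_dec u0 z0) as [h|h]; auto; pose proof (cdf_mono F hF z0 u0 h); lra).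
  pose proof (hazard_strict F u0 z0 ltac:(lra) ltac:(lra)) as Hgrow.
  pose proof (hazard_pos F u0 ltac:(lra)) as Hpos.
  set (c := (Rhaz F z0 - Rhaz F u0) / (z0 - u0)).
  assert (Hc : c > 0) by (apply Rdiv_lt_0_compat; lra).
  exists (u0 - Rhaz F u0 / c), c. split; auto. intros x Hx.
  assert (Hline : Rhaz F x = Rhaz F u0 + c * (x - u0)).
  { destruct (Rtotal_order x u0) as [h|[->|h]]; [| ring |].
    - pose proof (hazard_slope_constant x u0 z0 ltac:(lra) h ltac:(lra) ltac:(lra) ltac:(lra)).
      apply (Rmult_eq_reg_r (z0 - u0)); [unfold c; field_simplify; nra | lra].
    - pose proof (hazard_slope_constant u0 x z0 ltac:(lra) h Huz ltac:(lra) ltac:(lra)).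
      apply (Rmult_eq_reg_r (z0 - u0)); [unfold c; field_simplify; nra | lra]. }
  rewrite Hline. field. lra.
Qed.

End Regression.

(** A continuous cdf with affine hazard is a shifted exponential *)

Section AffineHazard.
Variables (F : R -> R) (l c : R).
Hypothesis hF : is_cdf F.
Hypothesis hc : continuity F.
Hypothesis hpos : c > 0.
Hypothesis haff : forall x, 0 < F x < 1 -> Rhaz F x = c * (x - l).

Let E (x : R) : R := 1 - exp (- (c * (x - l))).

Lemma E_strict x y : x < y -> E x < E y.
Proof. intros H. unfold E. pose proof (exp_increasing (- (c * (y - l))) (- (c * (x - l)))). nra. Qed.

Lemma affine_cdf_formula x : 0 < F x < 1 -> F x = E x.
Proof. intros Hx. unfold E. rewrite <- haff by auto. apply cdf_of_hazard; lra. Qed.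

(* F never reaches 1: otherwise F would take, between a median and x,
   values in (E x, 1), which E does not take before x. *)
Lemma affine_cdf_lt_1 x : F x < 1.
Proof.
  destruct (Rlt_le_dec (F x) 1) as [h|h]; auto. exfalso.
  destruct (cdf_interior_value F hF hc (1/2) ltac:(lra)) as [u0 Fu0].
  assert (Ex : E x < 1) by (unfold E; pose proof (exp_pos (- (c * (x - l)))); lra).
  set (t := (Rmax (E x) (1/2) + 1) / 2).
  assert (Ht : E x < t /\ 1/2 < t /\ t < 1).
  { unfold t. pose proof (Rmax_l (E x) (1/2)). pose proof (Rmax_r (E x) (1/2)).
    assert (Rmax (E x) (1/2) < 1) by (apply Rmax_lub_lt; lra). lra. }
  destruct (cdf_ivt F hF hc u0 x t ltac:(lra)) as [z [Hz Fz]].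
  pose proof (affine_cdf_formula z ltac:(lra)). pose proof (E_strict z x ltac:(lra)). lra.
Qed.

Lemma affine_cdf_pos x : l < x -> 0 < F x.
Proof.
  intros Hlx. destruct (Rlt_le_dec 0 (F x)) as [h|h]; auto. exfalso.
  destruct (cdf_interior_value F hF hc (1/2) ltac:(lra)) as [u0 Fu0].
  assert (Ex : 0 < E x) by (pose proof (E_strict l x Hlx); unfold E in *;
                            rewrite Rminus_diag, Rmult_0_r, Ropp_0, exp_0 in *; lra).
  set (t := Rmin (E x) (1/2) / 2).
  assert (Ht : 0 < t /\ t < E x /\ t < 1/2).
  { unfold t. pose proof (Rmin_l (E x) (1/2)). pose proof (Rmin_r (E x) (1/2)).
    assert (0 < Rmin (E x) (1/2)) by (apply Rmin_pos; lra). lra. }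
  destruct (cdf_ivt F hF hc x u0 t ltac:(lra)) as [z [Hz Fz]].
  pose proof (affine_cdf_formula z ltac:(lra)). pose proof (E_strict x z ltac:(lra)). lra.
Qed.

(* To the left of l the hazard would be nonpositive, so F vanishes. *)
Lemma affine_cdf_zero x : x <= l -> F x = 0.
Proof.
  intros Hxl. pose proof (cdf_nonneg F hF x).
  destruct (Rle_lt_dec (F x) 0) as [h|h]; [lra | exfalso].
  pose proof (hazard_pos F x (conj h (affine_cdf_lt_1 x))).
  rewrite haff in * by (split; auto using affine_cdf_lt_1). nra.
Qed.

Lemma affine_hazard_exponential :
  is_lF F l /\ rF_infinite F /\ forall x, l <= x -> F x = 1 - exp (- (c * (x - l))).
Proof.
  split; [split | split].
  - intros x Hx. destruct (Rle_lt_dec l x) as [h|h]; auto.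
    rewrite affine_cdf_zero in Hx by lra. lra.
  - intros m Hm. destruct (Rle_lt_dec m l) as [h|h]; auto.
    pose proof (Hm ((l + m) / 2) (affine_cdf_pos ((l + m) / 2) ltac:(lra))). lra.
  - intros x. exists (x + 1). split; [lra | apply affine_cdf_lt_1].
  - intros x [Hx | <-].
    + apply affine_cdf_formula. split; [apply affine_cdf_pos | apply affine_cdf_lt_1]; auto.
    + rewrite affine_cdf_zero by lra. rewrite Rminus_diag, Rmult_0_r, Ropp_0, exp_0. ring.
Qed.

End AffineHazard.

Theorem mainTheorem3 (F : R -> R) (n k : nat)
  (hn : (2 <= n)%nat) (hk1 : (1 <= k)%nat) (hk2 : (k <= n - 1)%nat)
  (hF : is_cdf F) (hcont : continuity F) :
  (forall u v, lF_lt F u -> u < v -> lt_rF F v -> F u < F v ->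
     cond_exp_is F k u v ((u + INR k * v) / (INR k + 1)))
  <->
  (exists l, is_lF F l /\ rF_infinite F /\
     exists c, c > 0 /\ forall x, l <= x -> F x = 1 - exp (- (c * (x - l)))).
Proof.
  split.
  - intros hreg.
    destruct (hazard_affine F k hF hcont hk1 hreg) as [l [c [Hc Haff]]].
    destruct (affine_hazard_exponential F l c hF hcont Hc Haff) as [Hl [Hr Hform]].
    exists l. split; [auto | split; [auto | exists c; auto]].
  - intros [l [Hl [_ [c [Hc Hform]]]]] u v Hu Huv _ _.
    exact (exponential_cond_exp F k l c u v hk1 Hl Hc Hform Hu Huv).
Qed.
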